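(* Let $\mathfrak g$ be a Lie algebra, $(\mathfrak k,\pi)$ a $\mathfrak g$-Lie algebra (write $\xi\cdot x=\pi(\xi)x$), $r_\pm:\mathfrak k\to\mathfrak g$ linear maps, $\lambda\in\mathbb R$, $r=(r_++r_-)/2$, $\beta=(r_+-r_-)/2$. Suppose $\beta$ is antisymmetric of mass $\nu\neq0$, $\mathfrak g$-invariant of mass $\kappa\neq0$ and equivalent of mass $\lambda$. Then: (i) for each sign, the bracket $[x,y]_\pm:=\lambda[x,y]_{\mathfrak k}\pm2\beta(x)\cdot y$ is a Lie bracket on the vector space $\mathfrak k$, and with it $(\mathfrak k_\pm,\pi)$ is a $\mathfrak g$-Lie algebra; (ii) for each sign, $r$ is an extended $\mathcal O$-operator of weight $\lambda$ with extension $\beta$ of mass $(\nu,-1,\pm\lambda)$ (for $\nu\neq 0$) if and only if $r_\pm:\mathfrak k_\mp\to\mathfrak g$ is an $\mathcal O$-operator of weight $1$, where $\mathfrak k_\mp$ carries the bracket $[\,,\,]_\mp$.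
   Context: All spaces are finite-dimensional real. A $\mathfrak g$-Lie algebra $(\mathfrak k,\pi)$ is a Lie algebra $(\mathfrak k,[\,,\,]_{\mathfrak k})$ with a Lie algebra homomorphism $\pi:\mathfrak g\to\mathrm{Der}(\mathfrak k)$. For constants $\nu,\kappa,\mu$, a linear map $\beta:\mathfrak k\to\mathfrak g$ is: antisymmetric of mass $\nu$ if $\nu(\beta(x)\cdot y+\beta(y)\cdot x)=0$; $\mathfrak g$-invariant of mass $\kappa$ if $\kappa\beta(\xi\cdot x)=\kappa[\xi,\beta(x)]_{\mathfrak g}$; equivalent of mass $\mu$ if $\mu\beta([x,y]_{\mathfrak k})\cdot z=\mu[\beta(x)\cdot y,z]_{\mathfrak k}$ (for all $x,y,z\in\mathfrak k,\xi\in\mathfrak g$). Given such $\beta$, $r:\mathfrak k\to\mathfrak g$ is an extended $\mathcal O$-operator of weight $\lambda$ with extension $\beta$ of mass $(\nu,\kappa,\mu)$ if $[r(x),r(y)]_{\mathfrak g}-r(r(x)\cdot y-r(y)\cdot x+\lambda[x,y]_{\mathfrak k})=\kappa[\beta(x),\beta(y)]_{\mathfrak g}+\mu\beta([x,y]_{\mathfrak k})$ for all $x,y$. If $(\mathfrak k,\pi)$ is a $\mathfrak g$-Lie algebra with bracket $[\,,\,]$, a linear map $T:\mathfrak k\to\mathfrak g$ is an $\mathcal O$-operator of weight $\lambda$ if $[T(x),T(y)]_{\mathfrak g}=T(T(x)\cdot y-T(y)\cdot x+\lambda[x,y])$ for all $x,y$. *)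

From HB Require Import structures.
From mathcomp Require Import all_boot all_order all_algebra.
Set Implicit Arguments. Unset Strict Implicit. Unset Printing Implicit Defensive.
Import Order.TTheory GRing.Theory Num.Theory.
Local Open Scope ring_scope.

Section LieDefs.
Variable R : realFieldType.

Definition is_lie_bracket (V : lmodType R) (br : V -> V -> V) : Prop :=
  [/\ (forall (a : R) (x y z : V), br (a *: x + y) z = a *: br x z + br y z),
      (forall (a : R) (x y z : V), br z (a *: x + y) = a *: br z x + br z y),
      (forall x : V, br x x = 0) &
      (forall x y z : V, br x (br y z) + br y (br z x) + br z (br x y) = 0)].

Definition is_g_lie_algebra (g k : lmodType R) (brg : g -> g -> g)
  (brk : k -> k -> k) (pi : g -> k -> k) : Prop :=
  [/\ is_lie_bracket brg, is_lie_bracket brk,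
      ((forall (a : R) (xi eta : g) (x : k), pi (a *: xi + eta) x = a *: pi xi x + pi eta x) /\
       (forall (xi : g) (a : R) (x y : k), pi xi (a *: x + y) = a *: pi xi x + pi xi y)),
      (forall (xi : g) (x y : k), pi xi (brk x y) = brk (pi xi x) y + brk x (pi xi y)) &
      (forall (xi eta : g) (x : k), pi (brg xi eta) x = pi xi (pi eta x) - pi eta (pi xi x))].

Definition antisym_mass (g k : lmodType R) (pi : g -> k -> k) (beta : k -> g) (nu : R) :=
  forall x y : k, nu *: (pi (beta x) y + pi (beta y) x) = 0.

Definition ginv_mass (g k : lmodType R) (brg : g -> g -> g) (pi : g -> k -> k)
  (beta : k -> g) (kappa : R) :=
  forall (xi : g) (x : k), kappa *: beta (pi xi x) = kappa *: brg xi (beta x).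

Definition equiv_mass (g k : lmodType R) (brk : k -> k -> k) (pi : g -> k -> k)
  (beta : k -> g) (mu : R) :=
  forall x y z : k, mu *: pi (beta (brk x y)) z = mu *: brk (pi (beta x) y) z.

Definition ext_O_operator (g k : lmodType R) (brg : g -> g -> g) (brk : k -> k -> k)
  (pi : g -> k -> k) (r beta : k -> g) (lam nu kappa mu : R) : Prop :=
  [/\ antisym_mass pi beta nu, ginv_mass brg pi beta kappa, equiv_mass brk pi beta mu &
      forall x y : k,
        brg (r x) (r y) - r (pi (r x) y - pi (r y) x + lam *: brk x y)
        = kappa *: brg (beta x) (beta y) + mu *: beta (brk x y)].

Definition O_operator (g k : lmodType R) (brg : g -> g -> g) (brk : k -> k -> k)
  (pi : g -> k -> k) (T : k -> g) (lam : R) : Prop :=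
  forall x y : k, brg (T x) (T y) = T (pi (T x) y - pi (T y) x + lam *: brk x y).

Definition sgn (s : bool) : R := if s then 1 else -1.

Definition br_sign (g k : lmodType R) (brk : k -> k -> k) (pi : g -> k -> k)
  (beta : k -> g) (lam : R) (s : bool) (x y : k) : k :=
  lam *: brk x y + sgn s *: (2 *: pi (beta x) y).

End LieDefs.

(* Write beta(x).y for the action pi (beta x) y.  Under the hypotheses on
   beta this action is skew (antisymmetry), satisfies the Jacobi identity
   (invariance + pi being a homomorphism), is acted on by g through
   derivations (invariance), and is compatible with [ , ]_k in the sense
   that the mixed Jacobiator of the two brackets vanishes after scaling by
   lam (equivalence).  Expanding the Jacobiator of a linear combination
   a B1 + c B2 of brackets shows that every [ , ]_c := lam [ , ] + 2c beta(.).(.)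
   is then a Lie bracket on which g acts by derivations: this is part (i).
   For part (ii), an explicit computation shows that, for T = r + eps beta,
   the weight-1 O-operator defect of T for [ , ]_(-eps) equals the extended
   O-operator defect of r for the mass (-eps^2, eps lam); with eps = +-1 and
   r+- = r +- beta the equivalence follows. *)

From HB Require Import structures.
From mathcomp Require Import all_boot all_order all_algebra.
Import Order.TTheory GRing.Theory Num.Theory.
Set Implicit Arguments. Unset Strict Implicit.
Local Open Scope ring_scope.

(* The definitions state linearity in the combined form
   f (a x + y) = a f x + f y; the usual rules follow from it. *)
Section CombinedLinearity.
Variables (R : realFieldType) (U W : lmodType R) (f : U -> W).
Hypothesis f_comb : forall a x y, f (a *: x + y) = a *: f x + f y.

Lemma comb0 : f 0 = 0.
Proof. by have := f_comb (-1) 0 0; rewrite scaler0 addr0 scaleN1r addNr. Qed.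
Lemma combD x y : f (x + y) = f x + f y.
Proof. by rewrite -[x]scale1r f_comb !scale1r. Qed.
Lemma combZ a x : f (a *: x) = a *: f x.
Proof. by rewrite -[a *: x]addr0 f_comb comb0 addr0. Qed.
Lemma combN x : f (- x) = - f x.
Proof. by rewrite -scaleN1r combZ scaleN1r. Qed.
Lemma combB x y : f (x - y) = f x - f y.
Proof. by rewrite combD combN. Qed.
End CombinedLinearity.

Section Jacobiators.
Variables (R : realFieldType) (V : lmodType R).

Definition jacobiator (br : V -> V -> V) (x y z : V) : V :=
  br x (br y z) + br y (br z x) + br z (br x y).

(* Cross terms of the Jacobiator of a sum of two brackets b1 and b2. *)
Definition mixed_jacobiator (b1 b2 : V -> V -> V) (x y z : V) : V :=
  (b1 x (b2 y z) + b2 x (b1 y z)) + (b1 y (b2 z x) + b2 y (b1 z x))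
  + (b1 z (b2 x y) + b2 z (b1 x y)).

Lemma addr3_transpose (p1 p2 p3 q1 q2 q3 s1 s2 s3 : V) :
  (p1 + q1 + s1) + (p2 + q2 + s2) + (p3 + q3 + s3)
  = (p1 + p2 + p3) + (q1 + q2 + q3) + (s1 + s2 + s3).
Proof.
rewrite (addrACA (p1 + q1)) (addrACA p1).
by rewrite (addrACA (p1 + p2 + (q1 + q2))) (addrACA (p1 + p2)).
Qed.

Lemma addr_cyclic_telescope (a1 a2 a3 b1 b2 b3 : V) :
  (a1 + (b1 + - a2)) + (a2 + (b2 + - a3)) + (a3 + (b3 + - a1)) = b1 + b2 + b3.
Proof.
rewrite (addrCA a1) (addrCA a2) (addrCA a3) (addrACA b1) (addrA (a1 - a2)) subrK.
by rewrite (addrACA (b1 + b2)) (addrA (a1 - a3)) subrK subrr addr0.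
Qed.

Lemma jacobiator_comb (b1 b2 : V -> V -> V)
    (b1_comb : forall a x y z, b1 z (a *: x + y) = a *: b1 z x + b1 z y)
    (b2_comb : forall a x y z, b2 z (a *: x + y) = a *: b2 z x + b2 z y)
    (a c : R) (x y z : V) :
  jacobiator (fun u v => a *: b1 u v + c *: b2 u v) x y z
  = (a * a) *: jacobiator b1 x y z + (a * c) *: mixed_jacobiator b1 b2 x y z
    + (c * c) *: jacobiator b2 x y z.
Proof.
have expand u v w : a *: b1 u (a *: b1 v w + c *: b2 v w) + c *: b2 u (a *: b1 v w + c *: b2 v w)
    = (a * a) *: b1 u (b1 v w) + (a * c) *: (b1 u (b2 v w) + b2 u (b1 v w))
      + (c * c) *: b2 u (b2 v w).
  rewrite b1_comb b2_comb (combZ (fun a p q => b1_comb a p q u)).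
  rewrite (combZ (fun a p q => b2_comb a p q u)).
  by rewrite !scalerDr !scalerA [c * a]mulrC !addrA.
by rewrite /jacobiator !expand addr3_transpose -!scalerDr.
Qed.
End Jacobiators.

Section LieBracketFacts.
Variables (R : realFieldType) (V : lmodType R) (br : V -> V -> V).
Hypothesis br_lie : is_lie_bracket br.

Lemma br_combl a x y z : br (a *: x + y) z = a *: br x z + br y z.
Proof. by case: br_lie. Qed.
Lemma br_combr a x y z : br z (a *: x + y) = a *: br z x + br z y.
Proof. by case: br_lie. Qed.

Lemma brDl x y z : br (x + y) z = br x z + br y z.
Proof. exact: (combD (fun a p q => br_combl a p q z)). Qed.
Lemma brDr x y z : br z (x + y) = br z x + br z y.
Proof. exact: (combD (fun a p q => br_combr a p q z)). Qed.
Lemma brZl a x z : br (a *: x) z = a *: br x z.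
Proof. exact: (combZ (fun a p q => br_combl a p q z)). Qed.
Lemma brZr a x z : br z (a *: x) = a *: br z x.
Proof. exact: (combZ (fun a p q => br_combr a p q z)). Qed.
Lemma brNr x z : br z (- x) = - br z x.
Proof. exact: (combN (fun a p q => br_combr a p q z)). Qed.

Lemma br_anti x y : br y x = - br x y.
Proof.
case: br_lie => _ _ alt _; have := alt (x + y).
by rewrite brDl !brDr !alt add0r addr0 => /eqP; rewrite addr_eq0 => /eqP ->; rewrite opprK.
Qed.
End LieBracketFacts.

(* The setting of the theorem, with the masses already divided out:
   beta is linear, skew, invariant, and equivalent of mass lam. *)
Section Deformation.
Variables (R : realFieldType) (g k : lmodType R) (brg : g -> g -> g)
  (brk : k -> k -> k) (pi : g -> k -> k) (beta : k -> g) (lam : R).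
Hypothesis gk_lie : is_g_lie_algebra brg brk pi.
Hypothesis beta_comb : forall a x y, beta (a *: x + y) = a *: beta x + beta y.
Hypothesis beta_anti : forall x y, pi (beta x) y + pi (beta y) x = 0.
Hypothesis beta_inv : forall xi x, beta (pi xi x) = brg xi (beta x).
Hypothesis beta_equiv : equiv_mass brk pi beta lam.

Let brg_lie : is_lie_bracket brg. Proof. by case: gk_lie. Qed.
Let brk_lie : is_lie_bracket brk. Proof. by case: gk_lie. Qed.
Let pi_combl a xi eta x : pi (a *: xi + eta) x = a *: pi xi x + pi eta x.
Proof. by case: gk_lie => _ _ []. Qed.
Let pi_combr xi a x y : pi xi (a *: x + y) = a *: pi xi x + pi xi y.
Proof. by case: gk_lie => _ _ []. Qed.
Let pi_der xi x y : pi xi (brk x y) = brk (pi xi x) y + brk x (pi xi y).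
Proof. by case: gk_lie. Qed.
Let pi_hom xi eta x : pi (brg xi eta) x = pi xi (pi eta x) - pi eta (pi xi x).
Proof. by case: gk_lie. Qed.

Let piDl xi eta x : pi (xi + eta) x = pi xi x + pi eta x.
Proof. exact: (combD (fun a p q => pi_combl a p q x)). Qed.
Let piZl a xi x : pi (a *: xi) x = a *: pi xi x.
Proof. exact: (combZ (fun a p q => pi_combl a p q x)). Qed.
Let piDr xi x y : pi xi (x + y) = pi xi x + pi xi y.
Proof. exact: (combD (pi_combr xi)). Qed.
Let piZr xi a x : pi xi (a *: x) = a *: pi xi x.
Proof. exact: (combZ (pi_combr xi)). Qed.
Let piNr xi x : pi xi (- x) = - pi xi x.
Proof. exact: (combN (pi_combr xi)). Qed.

Lemma beta_act_skew x y : pi (beta y) x = - pi (beta x) y.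
Proof. by apply/eqP; rewrite -addr_eq0 addrC beta_anti. Qed.

Lemma beta_act_alt x : pi (beta x) x = 0.
Proof.
have := beta_anti x x; rewrite -mulr2n -scaler_nat => /eqP.
by rewrite scaler_eq0 pnatr_eq0 => /eqP.
Qed.

(* The action of beta satisfies the Jacobi identity: invariance turns
   [beta x, beta y] into beta (beta(x).y), and pi is a Lie homomorphism. *)
Lemma beta_act_jacobi x y z :
  jacobiator (fun u v => pi (beta u) v) x y z = 0.
Proof.
rewrite /jacobiator (beta_act_skew x z) piNr (beta_act_skew (pi (beta x) y) z).
by rewrite beta_inv pi_hom opprB addrA subrK subrr.
Qed.

Lemma beta_act_mixed_jacobi x y z :
  lam *: mixed_jacobiator brk (fun u v => pi (beta u) v) x y z = 0.
Proof.
have equiv_cycle : lam *: brk (pi (beta x) y) z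
    = - (lam *: (brk (pi (beta y) z) x + brk (pi (beta z) x) y)).
  rewrite -beta_equiv beta_act_skew pi_der (beta_act_skew y z) (brNr brk_lie).
  by rewrite (br_anti brk_lie (pi (beta y) z)) opprK scalerN addrC.
rewrite /mixed_jacobiator !pi_der (beta_act_skew z x) (beta_act_skew x y).
rewrite (beta_act_skew y z) !(brNr brk_lie) addr_cyclic_telescope.
by rewrite -addrA scalerDr equiv_cycle addNr.
Qed.

Lemma beta_act_equivariant xi x y :
  pi xi (pi (beta x) y) = pi (beta (pi xi x)) y + pi (beta x) (pi xi y).
Proof. by rewrite beta_inv pi_hom subrK. Qed.

Definition deformed (c : R) (x y : k) : k := lam *: brk x y + c *: (2 *: pi (beta x) y).

Lemma deformedE c x y : deformed c x y = lam *: brk x y + (c * 2) *: pi (beta x) y.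
Proof. by rewrite /deformed scalerA. Qed.

Lemma deformed_lie c : is_lie_bracket (deformed c).
Proof.
case: (brk_lie) => _ _ brk_alt brk_jacobi; split.
- move=> a x y z; rewrite !deformedE (br_combl brk_lie) beta_comb pi_combl.
  by rewrite !scalerDr !scalerA [lam * a]mulrC [c * 2 * a]mulrC addrACA.
- move=> a x y z; rewrite !deformedE (br_combr brk_lie) pi_combr.
  by rewrite !scalerDr !scalerA [lam * a]mulrC [c * 2 * a]mulrC addrACA.
- by move=> x; rewrite deformedE brk_alt beta_act_alt !scaler0 addr0.
- move=> x y z; rewrite -[LHS]/(jacobiator (deformed c) x y z).
  have -> : jacobiator (deformed c) x y z
      = jacobiator (fun u v => lam *: brk u v + (c * 2) *: pi (beta u) v) x y z.
    by rewrite /jacobiator !deformedE.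
  rewrite (jacobiator_comb (br_combr brk_lie) (fun a p q z => pi_combr (beta z) a p q)).
  rewrite [jacobiator brk _ _ _]brk_jacobi beta_act_jacobi !scaler0 add0r addr0.
  by rewrite mulrC -scalerA beta_act_mixed_jacobi scaler0.
Qed.

Lemma deformed_g_lie c : is_g_lie_algebra brg (deformed c) pi.
Proof.
split; [exact: brg_lie | exact: deformed_lie | | | exact: pi_hom].
- by split=> *; [apply: pi_combl | apply: pi_combr].
- move=> xi x y; rewrite !deformedE piDr !piZr pi_der beta_act_equivariant.
  by rewrite !scalerDr addrACA.
Qed.

Lemma O_defect_shift (eps : R) (r T : k -> g) (TE : forall z, T z = r z + eps *: beta z) x y :
  brg (T x) (T y) - T (pi (T x) y - pi (T y) x + 1 *: deformed (- eps) x y)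
  = brg (r x) (r y) - r (pi (r x) y - pi (r y) x + lam *: brk x y)
    - ((- (eps * eps)) *: brg (beta x) (beta y) + (eps * lam) *: beta (brk x y)).
Proof.
set A := pi (r x) y - pi (r y) x + lam *: brk x y.
have argE : pi (T x) y - pi (T y) x + 1 *: deformed (- eps) x y = A.
  rewrite scale1r deformedE !TE !piDl !piZl (beta_act_skew x y) scalerN mulNr scaleNr.
  rewrite -scalerA scaler_nat mulr2n scalerDr opprB [_ *: _ - _]addrC (addrACA (pi (r x) y)).
  by rewrite (addrACA (pi (r x) y - pi (r y) x)) subrr addr0.
have betaE : beta A = brg (r x) (beta y) + brg (beta x) (r y) + lam *: beta (brk x y).
  rewrite /A (combD beta_comb) (combB beta_comb) (combZ beta_comb) !beta_inv.
  by rewrite (br_anti brg_lie (beta x)) opprK.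
rewrite argE !TE betaE (brDl brg_lie) !(brDr brg_lie) !(brZl brg_lie) !(brZr brg_lie).
rewrite !scalerDr !scalerA scaleNr.
have regroup (D rA m1 m2 bb bk : g) :
    D + m1 + (m2 + bb) - (rA + (m1 + m2 + bk)) = D - rA - (- bb + bk).
  rewrite [m2 + bb]addrC addrACA (addrCA rA) addrKA.
  by rewrite !opprD opprK addrACA.
exact: regroup.
Qed.

Lemma ext_O_operator_iff_shift (eps nu : R) (r T : k -> g)
    (TE : forall z, T z = r z + eps *: beta z) (eps2 : eps * eps = 1) :
  antisym_mass pi beta nu ->
  ext_O_operator brg brk pi r beta lam nu (-1) (eps * lam)
  <-> O_operator brg (deformed (- eps)) pi T 1.
Proof.
move=> beta_anti_nu; have defect := O_defect_shift TE; rewrite eps2 in defect.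
split.
- by case=> _ _ _ extO x y; apply/eqP; rewrite -subr_eq0 defect extO subrr.
- move=> TO; split=> //.
  + by move=> xi x; rewrite beta_inv.
  + by move=> x y z; rewrite -!scalerA beta_equiv.
  + by move=> x y; apply/eqP; rewrite -subr_eq0 -defect TO subrr.
Qed.
End Deformation.

Unset Implicit Arguments.

Theorem theorem2p15 (R : realFieldType) (g k : vectType R)
  (brg : g -> g -> g) (brk : k -> k -> k) (pi : g -> k -> k)
  (rp rm : {linear k -> g}) (lam nu kappa : R) :
  is_g_lie_algebra brg brk pi ->
  let r := fun x : k => 2^-1 *: (rp x + rm x) in
  let beta := fun x : k => 2^-1 *: (rp x - rm x) in
  nu != 0 -> kappa != 0 ->
  antisym_mass pi beta nu -> ginv_mass brg pi beta kappa -> equiv_mass brk pi beta lam ->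
  (forall s : bool,
     is_lie_bracket (br_sign brk pi beta lam s) /\
     is_g_lie_algebra brg (br_sign brk pi beta lam s) pi)
  /\
  (forall s : bool,
     ext_O_operator brg brk pi r beta lam nu (-1) (sgn R s * lam)
     <-> O_operator brg (br_sign brk pi beta lam (~~ s)) pi (if s then rp else rm) 1).
Proof.
move=> gk_lie r beta nu_neq0 kappa_neq0 beta_anti_nu beta_inv_kappa beta_equiv.
have beta_comb a x y : beta (a *: x + y) = a *: beta x + beta y.
  rewrite /beta /= [rp _]linearP [rm _]linearP opprD addrACA.
  by rewrite -scalerBr scalerDr scalerA mulrC -scalerA.
have beta_anti x y : pi (beta x) y + pi (beta y) x = 0.
  by apply/eqP; move: (beta_anti_nu x y) => /eqP; rewrite scaler_eq0 (negbTE nu_neq0).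
have beta_inv xi x : beta (pi xi x) = brg xi (beta x).
  exact: (scalerI kappa_neq0 (beta_inv_kappa xi x)).
have halves (u v : g) : 2^-1 *: (u + v) + 2^-1 *: (u - v) = u.
  rewrite -scalerDr addrACA subrr addr0 -mulr2n -scaler_nat scalerA mulVf ?scale1r //.
  by rewrite pnatr_eq0.
have rpE z : rp z = r z + 1 *: beta z by rewrite scale1r halves.
have rmE z : rm z = r z + (-1) *: beta z.
  by rewrite scaleN1r /r /beta -scalerN opprB [rp z + _]addrC halves.
split=> s.
  exact: (conj (deformed_lie gk_lie beta_comb beta_anti beta_inv beta_equiv (sgn R s))
               (deformed_g_lie gk_lie beta_comb beta_anti beta_inv beta_equiv (sgn R s))).
case: s => /=.
  exact: (ext_O_operator_iff_shift gk_lie beta_comb beta_anti beta_inv beta_equiv rpE (mulr1 1)).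
have -> : br_sign brk pi beta lam (~~ false) = deformed brk pi beta lam (- (-1)).
  by rewrite opprK.
have sq_m1 : (-1 : R) * -1 = 1 by rewrite mulrNN mulr1.
exact: (ext_O_operator_iff_shift gk_lie beta_comb beta_anti beta_inv beta_equiv rmE sq_m1).
Qed.
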